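(* Let $A$ be a Heffter array $H(n;k)$ in which the entries of each row and each column sum (as integers) to $2nk+1$. Suppose there exist two sets of cells $H_1$ and $H_2$, each forming a Hamilton cycle, which are disjoint from each other and from the filled cells of $A$. Then there exists a Heffter array $H(n;k+4)$ whose rows and columns all sum (as integers) to $2n(k+4)+1$, and whose filled cells are precisely the filled cells of $A$ together with the cells of $H_1$ and $H_2$.
   Context: A Heffter array $H(n;k)$ is an $n\times n$ array in which some cells are filled with nonzero integers and the others are empty, such that: each row and each column contains exactly $k$ filled cells; the entries of every row and of every column sum to $0$ modulo $2nk+1$; and for each integer $1\le x\le nk$, exactly one of $x$ or $-x$ appears in the array, and it appears exactly once. Cells of an $n\times n$ array are identified with edges of $K_{n,n}$ (cell $(i,j)$ ↔ edge $\{a_i,b_j\}$); a set of cells forms a Hamilton cycle if the corresponding edge set is a single cycle of length $2n$. *)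

From HB Require Import structures.
From mathcomp Require Import all_boot all_order all_algebra.
Set Implicit Arguments. Unset Strict Implicit. Unset Printing Implicit Defensive.
Import Order.TTheory GRing.Theory Num.Theory.

(* An n x n partially filled array of integers is encoded as an integer matrix;
   a cell is "filled" iff its entry is nonzero (entries of a Heffter array are
   nonzero by definition), "empty" iff its entry is 0. *)

Definition filled (n : nat) (A : 'M[int]_n) : {set 'I_n * 'I_n} :=
  [set c | (A c.1 c.2 != 0)%R].

Definition heffter (n k : nat) (A : 'M[int]_n) : Prop :=
  [/\ (forall i : 'I_n, #|[set j : 'I_n | (A i j != 0)%R]| = k),
      (forall j : 'I_n, #|[set i : 'I_n | (A i j != 0)%R]| = k),
      (forall i : 'I_n, ((\sum_(j < n) A i j)%R %% (2 * n * k + 1)%:Z)%Z = 0),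
      (forall j : 'I_n, ((\sum_(i < n) A i j)%R %% (2 * n * k + 1)%:Z)%Z = 0) &
      (forall x : nat, 1 <= x <= n * k ->
         #|[set c : 'I_n * 'I_n | `|A c.1 c.2|%N == x]| = 1)].

Definition sums_equal (n : nat) (A : 'M[int]_n) (s : int) : Prop :=
  (forall i : 'I_n, (\sum_(j < n) A i j)%R = s) /\
  (forall j : 'I_n, (\sum_(i < n) A i j)%R = s).

(* A set of cells forms a Hamilton cycle of K_{n,n} (cell (i,j) <-> edge {a_i,b_j}):
   the edges are those of a cycle a_{r 0} b_{c 0} a_{r 1} b_{c 1} ... a_{r (n-1)} b_{c (n-1)} a_{r 0},
   with r, c bijections (injective maps 'I_n -> 'I_n). *)
Definition hamilton_cycle (n : nat) (C : {set 'I_n * 'I_n}) : Prop :=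
  exists r c : 'I_n -> 'I_n,
    [/\ injective r, injective c &
        C = [set (r i, c i) | i : 'I_n] :|: [set (r (ordS i), c i) | i : 'I_n]].

From HB Require Import structures.
From mathcomp Require Import all_boot all_order all_algebra.
From mathcomp Require Import zify.
Import Order.TTheory GRing.Theory Num.Theory.

(* Write each Hamilton cycle as the cells [(r l, c l)] and [(r (l + 1), c l)],
   [l] mod [n], with [r], [c] bijections, and let [m = n k].  Negate [A] and label
   the first cycle by [m + 1 + l] and [m + n + 1 + (n - 1 - l)], the second one by
   [m + 2n + 1 + (n - 1 - l)] and [m + 3n + 1 + l]: the labels run exactly through
   [m + 1, ..., m + 4n].  Each column of a cycle has a constant label sum
   ([2m + 2n + 1], resp. [2m + 6n + 1]), and so does each row ([2m + 2n + 2],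
   resp. [2m + 6n]) except the row of [r 0], where the cycle wraps around and the
   sum is off by [-n], resp. [+n].  Rotating the second cycle so that both wrap
   around in the same row cancels these defects, so all lines of the new array sum
   to [-(2m + 1) + 2(2m + 1) + 8n = 2n(k + 4) + 1]. *)

Set Implicit Arguments. Unset Strict Implicit. Unset Printing Implicit Defensive.

Lemma card_set_sum (T : finType) (p : pred T) : #|[set x | p x]| = \sum_x p x.
Proof. by rewrite -sum1dep_card big_mkcond; apply: eq_bigr => x _; case: (p x). Qed.

Lemma sum_addn_eq a y n : \sum_(l < n) (a + l == y) = (a <= y < a + n).
Proof.
elim: n => [|n IHn]; first by rewrite big_ord0; lia.
by rewrite big_ord_recr /= IHn; lia.
Qed.

Lemma sum_addn_rev_eq a y n : \sum_(l < n) (a + (n.-1 - l) == y) = (a <= y < a + n).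
Proof.
rewrite -sum_addn_eq (reindex_inj rev_ord_inj); apply: eq_bigr => l _ /=.
by have := ltn_ord l; case: n l => // n l lt_l_n; rewrite subKn.
Qed.

Lemma ordSE n (l : 'I_n) : ordS l = (if l == n.-1 :> nat then 0 else l.+1) :> nat.
Proof.
case: l => l /= lt_l_n; case: eqP => [->|ne].
  by rewrite prednK ?modnn //; lia.
by rewrite modn_small //; lia.
Qed.

Lemma ord_predE n (l : 'I_n) : ord_pred l = (if l == 0 :> nat then n.-1 else l.-1) :> nat.
Proof.
case: l => l /= lt_l_n; case: eqP => [->|ne].
  by rewrite add0n modn_small //; lia.
have -> : (l + n).-1 = l.-1 + n by lia.
by rewrite modnDr modn_small //; lia.
Qed.

Lemma ordS_addr n (l t : 'I_n.+1) : ordS (l + t)%R = (ordS l + t)%R.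
Proof. by apply: val_inj; rewrite /= -addn1 !modnDml addn1 addSn. Qed.

Lemma ordS_neq n (l : 'I_n) : 1 < n -> ordS l != l.
Proof. by move=> n_gt1; apply/eqP => /(congr1 (@nat_of_ord n)); rewrite ordSE; case: eqP; lia. Qed.

Definition cycle_cells n (r c : 'I_n -> 'I_n) : {set 'I_n * 'I_n} :=
  [set (r i, c i) | i : 'I_n] :|: [set (r (ordS i), c i) | i : 'I_n].

Lemma cycle_cells_ord1 (r c : 'I_1 -> 'I_1) : (ord0, ord0) \in cycle_cells r c.
Proof. by apply/setUP; left; apply/imsetP; exists ord0; rewrite // !ord1. Qed.

Lemma imset_reindex_inj (T U : finType) (f : T -> T) (F : T -> U) : injective f ->
  [set F (f l) | l : T] = [set F l | l : T].
Proof.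
move=> f_inj; apply/setP => x; apply/imsetP/imsetP => [[l _ ->]|[l _ ->]].
  by exists (f l).
by exists (invF f_inj l); rewrite ?f_invF.
Qed.

Lemma cycle_cells_rotate n (r c : 'I_n.+1 -> 'I_n.+1) (rho : 'I_n.+1) :
  injective r -> injective c ->
  exists r' c' : 'I_n.+1 -> 'I_n.+1,
    [/\ injective r', injective c', cycle_cells r' c' = cycle_cells r c & r' ord0 = rho].
Proof.
move=> r_inj c_inj; pose shift l := (l + invF r_inj rho)%R.
have shift_inj : injective shift by apply: addIr.
have shiftS l : ordS (shift l) = shift (ordS l) by exact: ordS_addr.
exists (r \o shift), (c \o shift); split.
- exact: inj_comp.
- exact: inj_comp.
- rewrite /cycle_cells /= (imset_reindex_inj (fun l => (r l, c l)) shift_inj).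
  rewrite -(imset_reindex_inj (fun l => (r (ordS l), c l)) shift_inj).
  by congr (_ :|: _); apply: eq_imset => l /=; rewrite shiftS.
- by rewrite /= /shift add0r f_invF.
Qed.

Section CycleFilling.
Variables (n : nat) (r c : 'I_n -> 'I_n).
Hypotheses (r_inj : injective r) (c_inj : injective c) (n_gt1 : 1 < n).

(* Writes [P l] in the cell [(r l, c l)] and [Q l] in the cell [(r (ordS l), c l)]. *)
Definition cycle_fill (P Q : 'I_n -> nat) (i j : 'I_n) : nat :=
  let l := invF r_inj i in let l' := invF c_inj j in
  (if c l == j then P l else 0) + (if r (ordS l') == i then Q l' else 0).

Local Notation r' := (invF r_inj).
Local Notation c' := (invF c_inj).

Lemma mem_cycle_cells i j :
  ((i, j) \in cycle_cells r c) = (c (r' i) == j) || (r (ordS (c' j)) == i).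
Proof.
apply/setUP/orP => [[/imsetP[l _ [-> ->]]|/imsetP[l _ [-> ->]]]|[/eqP<-|/eqP<-]].
- by left; rewrite invF_f.
- by right; rewrite invF_f.
- by left; apply/imsetP; exists (r' i); rewrite ?f_invF.
- by right; apply/imsetP; exists (c' j); rewrite ?f_invF.
Qed.

Lemma cycle_fill_row P Q i : \sum_j cycle_fill P Q i j = P (r' i) + Q (ord_pred (r' i)).
Proof.
rewrite big_split /=; congr (_ + _).
  by rewrite -big_mkcond (big_pred1 (c (r' i))) // => j; rewrite /= eq_sym.
rewrite -big_mkcond (reindex_inj c_inj) (big_pred1 (ord_pred (r' i))) /= ?invF_f // => l.
by rewrite invF_f /= -{1}(f_invF r_inj i) (inj_eq r_inj) -(inj_eq (@ord_pred_inj n)) ordSK.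
Qed.

Lemma cycle_fill_col P Q j : \sum_i cycle_fill P Q i j = P (c' j) + Q (c' j).
Proof.
rewrite big_split /=; congr (_ + _); last first.
  by rewrite -big_mkcond (big_pred1 (r (ordS (c' j)))) // => i; rewrite /= eq_sym.
rewrite -big_mkcond (reindex_inj r_inj) (big_pred1 (c' j)) /= ?invF_f // => l.
by rewrite invF_f /= -{1}(f_invF c_inj j) (inj_eq c_inj).
Qed.

Lemma cycle_fill_gt0 P Q i j : (forall l, 0 < P l) -> (forall l, 0 < Q l) ->
  (0 < cycle_fill P Q i j) = ((i, j) \in cycle_cells r c).
Proof.
move=> P_gt0 Q_gt0; rewrite mem_cycle_cells /cycle_fill /=.
by case: eqP; case: eqP; rewrite ?P_gt0 ?Q_gt0 ?addn_gt0 ?P_gt0.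
Qed.

(* No cell is both some [(r l, c l)] and some [(r (ordS l), c l)], as [ordS l != l] for [1 < n]. *)
Lemma cycle_cells_disjoint_halves i j : ~~ ((c (r' i) == j) && (r (ordS (c' j)) == i)).
Proof.
apply/andP => -[/eqP <-]; rewrite invF_f -{2}(f_invF r_inj i) (inj_eq r_inj).
exact/negP/ordS_neq.
Qed.

Lemma cycle_fill1E i j : cycle_fill (fun=> 1) (fun=> 1) i j = ((i, j) \in cycle_cells r c).
Proof.
have := cycle_cells_disjoint_halves i j.
by rewrite mem_cycle_cells /cycle_fill; case: eqP; case: eqP.
Qed.

Lemma card_cycle_cells_row i : #|[set j | (i, j) \in cycle_cells r c]| = 2.
Proof.
rewrite card_set_sum (eq_bigr _ (fun j _ => esym (cycle_fill1E i j))).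
by rewrite cycle_fill_row.
Qed.

Lemma card_cycle_cells_col j : #|[set i | (i, j) \in cycle_cells r c]| = 2.
Proof.
rewrite card_set_sum (eq_bigr _ (fun i _ => esym (cycle_fill1E i j))).
by rewrite cycle_fill_col.
Qed.

Lemma cycle_fill_count P Q x : 0 < x ->
  \sum_(e : 'I_n * 'I_n) (cycle_fill P Q e.1 e.2 == x) =
  \sum_l (P l == x) + \sum_l (Q l == x).
Proof.
move=> x_gt0; rewrite -(pair_big xpredT xpredT (fun i j => cycle_fill P Q i j == x : nat)) /=.
have split_eq i j : (cycle_fill P Q i j == x : nat) =
    ((c (r' i) == j) && (P (r' i) == x)) + ((r (ordS (c' j)) == i) && (Q (c' j) == x)).
  have := cycle_cells_disjoint_halves i j; rewrite /cycle_fill.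
  by case: eqP; case: eqP => //=; rewrite ?addn0 ?add0n ?andbF //; case: x x_gt0.
under eq_bigr => i _ do rewrite (eq_bigr _ (fun j _ => split_eq i j)) big_split.
rewrite big_split /=; congr (_ + _).
  rewrite (reindex_inj r_inj); apply: eq_bigr => l _; rewrite invF_f.
  by rewrite (bigD1 (c l)) //= eqxx big1 ?addn0 // => j /negbTE; rewrite eq_sym => ->.
rewrite exchange_big (reindex_inj c_inj); apply: eq_bigr => l _ /=; rewrite invF_f.
by rewrite (bigD1 (r (ordS l))) //= eqxx big1 ?addn0 // => i /negbTE; rewrite eq_sym => ->.
Qed.

End CycleFilling.

Section DisjointSupports.
Variables a b c : int.
Hypotheses (ab : (a == 0%R) || (b == 0%R)) (ac : (a == 0%R) || (c == 0%R))
  (bc : (b == 0%R) || (c == 0%R)).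

Lemma addz3_neq0 : (a + b + c != 0)%R = (a != 0%R) || (b != 0%R) || (c != 0%R).
Proof.
by case/orP: ab => /eqP->; [case/orP: bc | case/orP: ac] => /eqP->;
  rewrite ?eqxx ?addr0 ?add0r ?orbF.
Qed.

Lemma addz3_neq0_nat : (a + b + c != 0)%R = (a != 0%R) + (b != 0%R) + (c != 0%R) :> nat.
Proof.
by case/orP: ab => /eqP->; [case/orP: bc | case/orP: ac] => /eqP->;
  rewrite ?eqxx ?addr0 ?add0r ?addn0.
Qed.

Lemma abszD3_eq x : 0 < x ->
  (`|(a + b + c)%R| == x) = (`|a| == x) + (`|b| == x) + (`|c| == x) :> nat.
Proof.
case: x => // x _.
by case/orP: ab => /eqP->; [case/orP: bc | case/orP: ac] => /eqP->;
  rewrite ?addr0 ?add0r ?addn0.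
Qed.

End DisjointSupports.

Section HeffterEntries.
Variables (n k : nat) (A : 'M[int]_n).
Hypothesis hA : heffter k A.

Lemma card_filled_heffter : #|filled A| = n * k.
Proof.
case: hA => row_card _ _ _ _.
rewrite card_set_sum -(pair_big xpredT xpredT (fun i j => A i j != 0%R : nat)) /=.
under eq_bigr => i _ do rewrite -card_set_sum row_card.
by rewrite sum_nat_const card_ord.
Qed.

(* The [n * k] values [1, ..., n * k] already fill all the [n * k] filled cells. *)
Lemma heffter_absz_le i j : A i j != 0%R -> `|A i j| <= n * k.
Proof.
case: hA => _ _ _ _ abs_card.
pose S := [set e : 'I_n * 'I_n | 0 < `|A e.1 e.2| <= n * k].
have card_S : #|S| = n * k.
  rewrite card_set_sum; under eq_bigr => e _ do rewrite -(sum_addn_eq 1).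
  rewrite exchange_big /= (eq_bigr (fun=> 1)) ?sum_nat_const ?card_ord ?muln1 // => l _.
  rewrite (eq_bigr (fun e => `|A e.1 e.2| == 1 + l : nat)) => [|e _]; last by rewrite eq_sym.
  by rewrite -card_set_sum abs_card //; have := ltn_ord l; lia.
have S_sub : S \subset filled A.
  by apply/subsetP => -[i' j']; rewrite !inE /= absz_gt0 => /andP[].
have := (subset_leqif_cards S_sub).2; rewrite card_S card_filled_heffter eqxx.
move=> /esym /eqP S_eq nz_ij; have : (i, j) \in S by rewrite S_eq inE.
by rewrite inE => /andP[].
Qed.

Lemma heffter_card_absz_eq x : 0 < x ->
  #|[set e : 'I_n * 'I_n | `|A e.1 e.2| == x]| = (x <= n * k).
Proof.
case: hA => _ _ _ _ abs_card x_gt0; case: leqP => [x_le|x_gt]; first by rewrite abs_card ?x_gt0.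
apply/eqP; rewrite cards_eq0; apply/eqP/setP => -[i j]; rewrite !inE /=.
apply/negbTE; apply: contraTneq x_gt => eq_x; rewrite -leqNgt -eq_x.
by apply: heffter_absz_le; rewrite -absz_gt0 eq_x.
Qed.

End HeffterEntries.

Section Extension.
Variables (n k : nat) (A : 'M[int]_n.+2) (r1 c1 r2 c2 : 'I_n.+2 -> 'I_n.+2).
Local Notation N := n.+2.
Hypotheses (hA : heffter k A) (sA : sums_equal A (2 * N * k + 1)%:Z).
Hypotheses (r1_inj : injective r1) (c1_inj : injective c1).
Hypotheses (r2_inj : injective r2) (c2_inj : injective c2).
Hypothesis same_start : r1 ord0 = r2 ord0.
Local Notation H1 := (cycle_cells r1 c1).
Local Notation H2 := (cycle_cells r2 c2).
Hypotheses (H12 : [disjoint H1 & H2]) (H1A : [disjoint H1 & filled A])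
  (H2A : [disjoint H2 & filled A]).

Let m := N * k.
Let P1 (l : 'I_N) := m + 1 + l.
Let Q1 (l : 'I_N) := m + N + 1 + (N.-1 - l).
Let P2 (l : 'I_N) := m + 2 * N + 1 + (N.-1 - l).
Let Q2 (l : 'I_N) := m + 3 * N + 1 + l.
Let F1 := cycle_fill r1_inj c1_inj P1 Q1.
Let F2 := cycle_fill r2_inj c2_inj P2 Q2.

Definition heffter_ext : 'M[int]_N := \matrix_(i, j) (- A i j + (F1 i j)%:Z + (F2 i j)%:Z)%R.

Lemma F1_neq0 i j : (F1 i j != 0) = ((i, j) \in H1).
Proof. by rewrite -lt0n cycle_fill_gt0 // => l; rewrite /P1 /Q1 addn_gt0 addn1. Qed.

Lemma F2_neq0 i j : (F2 i j != 0) = ((i, j) \in H2).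
Proof. by rewrite -lt0n cycle_fill_gt0 // => l; rewrite /P2 /Q2 addn_gt0 addn1. Qed.

Lemma heffter_ext_supports i j :
  [/\ (- A i j == 0) || ((F1 i j)%:Z == 0), (- A i j == 0) || ((F2 i j)%:Z == 0) &
      ((F1 i j)%:Z == 0) || ((F2 i j)%:Z == 0)]%R.
Proof.
have inA : (A i j == 0%R) = ((i, j) \notin filled A) by rewrite inE negbK.
have in1 : (F1 i j == 0) = ((i, j) \notin H1) by rewrite -F1_neq0 negbK.
have in2 : (F2 i j == 0) = ((i, j) \notin H2) by rewrite -F2_neq0 negbK.
rewrite oppr_eq0 !eqz_nat inA in1 in2 -!negb_and; split; apply/andP => -[inX inY].
- by rewrite (disjointFr H1A inY) in inX.
- by rewrite (disjointFr H2A inY) in inX.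
- by rewrite (disjointFr H12 inX) in inY.
Qed.

Lemma heffter_extE i j : heffter_ext i j = (- A i j + (F1 i j)%:Z + (F2 i j)%:Z)%R.
Proof. by rewrite mxE. Qed.

Lemma filled_heffter_ext : filled heffter_ext = filled A :|: H1 :|: H2.
Proof.
apply/setP => -[i j]; have [s1 s2 s3] := heffter_ext_supports i j.
rewrite in_setU -F2_neq0 in_setU -F1_neq0 !inE /= heffter_extE addz3_neq0 //.
by rewrite oppr_eq0 !eqz_nat.
Qed.

Lemma heffter_ext_neq0 i j :
  (heffter_ext i j != 0%R) = (A i j != 0%R) + ((i, j) \in H1) + ((i, j) \in H2) :> nat.
Proof.
have [s1 s2 s3] := heffter_ext_supports i j.
by rewrite heffter_extE addz3_neq0_nat // oppr_eq0 !eqz_nat F1_neq0 F2_neq0.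
Qed.

Lemma heffter_ext_row_card i : #|[set j | heffter_ext i j != 0%R]| = k + 4.
Proof.
rewrite card_set_sum (eq_bigr _ (fun j _ => heffter_ext_neq0 i j)) !big_split /=.
by rewrite -!card_set_sum !card_cycle_cells_row //; case: hA => -> *; rewrite -addnA.
Qed.

Lemma heffter_ext_col_card j : #|[set i | heffter_ext i j != 0%R]| = k + 4.
Proof.
rewrite card_set_sum (eq_bigr _ (fun i _ => heffter_ext_neq0 i j)) !big_split /=.
by rewrite -!card_set_sum !card_cycle_cells_col //; case: hA => _ -> *; rewrite -addnA.
Qed.

Lemma heffter_ext_sums : sums_equal heffter_ext (2 * N * (k + 4) + 1)%:Z.
Proof.
split=> [i|j]; under eq_bigr do rewrite heffter_extE;
  rewrite !big_split /= sumrN -!(big_morph Posz PoszD (erefl 0%Z)).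
- rewrite sA.1 !cycle_fill_row /P1 /Q1 /P2 /Q2 !ord_predE.
  have start_row (r : 'I_N -> 'I_N) (r_inj : injective r) :
      (invF r_inj i == 0 :> nat) = (i == r ord0).
    by rewrite -[i in RHS](f_invF r_inj) (inj_eq r_inj).
  have : (invF r1_inj i == 0 :> nat) = (invF r2_inj i == 0 :> nat).
    by rewrite !start_row same_start.
  have := ltn_ord (invF r1_inj i); have := ltn_ord (invF r2_inj i).
  by rewrite /m; do 2 case: eqP; lia.
- rewrite sA.2 !cycle_fill_col /P1 /Q1 /P2 /Q2.
  have := ltn_ord (invF c1_inj j); have := ltn_ord (invF c2_inj j).
  by rewrite /m; lia.
Qed.

Lemma heffter_ext_card_absz_eq x : 0 < x <= N * (k + 4) ->
  #|[set e : 'I_N * 'I_N | `|heffter_ext e.1 e.2| == x]| = 1.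
Proof.
case/andP => x_gt0 x_le; rewrite card_set_sum.
rewrite (eq_bigr (fun e => (`|A e.1 e.2| == x) + (F1 e.1 e.2 == x) + (F2 e.1 e.2 == x)))
  => [|e _]; last first.
  have [s1 s2 s3] := heffter_ext_supports e.1 e.2.
  by rewrite heffter_extE abszD3_eq // abszN !absz_nat.
rewrite !big_split /= -card_set_sum (heffter_card_absz_eq hA) // !cycle_fill_count //.
rewrite /P1 /Q1 /P2 /Q2 !sum_addn_eq !sum_addn_rev_eq.
by move: x_le; rewrite /m; lia.
Qed.

Lemma heffter_extension : exists B : 'M[int]_N,
  [/\ heffter (k + 4) B, sums_equal B (2 * N * (k + 4) + 1)%:Z &
      filled B = filled A :|: H1 :|: H2].
Proof.
exists heffter_ext; split; [split|exact: heffter_ext_sums|exact: filled_heffter_ext].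
- exact: heffter_ext_row_card.
- exact: heffter_ext_col_card.
- by move=> i; rewrite heffter_ext_sums.1 modzz.
- by move=> j; rewrite heffter_ext_sums.2 modzz.
- exact: heffter_ext_card_absz_eq.
Qed.

End Extension.

Unset Implicit Arguments.

Theorem theorem2p2 (n k : nat) (A : 'M[int]_n) (H1 H2 : {set 'I_n * 'I_n}) :
  heffter k A ->
  sums_equal A (2 * n * k + 1)%:Z ->
  hamilton_cycle H1 -> hamilton_cycle H2 ->
  [disjoint H1 & H2] -> [disjoint H1 & filled A] -> [disjoint H2 & filled A] ->
  exists B : 'M[int]_n,
    [/\ heffter (k + 4) B,
        sums_equal B (2 * n * (k + 4) + 1)%:Z &
        filled B = filled A :|: H1 :|: H2].
Proof.
move=> hA sA [r1 [c1 [r1_inj c1_inj ->]]] [r2 [c2 [r2_inj c2_inj ->]]] H12 H1A H2A {H1 H2}.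
case: n => [|[|n]] in A r1 c1 r2 c2 r1_inj c1_inj r2_inj c2_inj hA sA H12 H1A H2A *.
- exists A; split; first by split; case.
  + by split; case.
  + by apply/setP => -[[]].
- by have := disjointFr H12 (cycle_cells_ord1 r1 c1); rewrite cycle_cells_ord1.
have [r2' [c2' [r2'_inj c2'_inj eq2 start]]] := cycle_cells_rotate (r1 ord0) r2_inj c2_inj.
rewrite -/(cycle_cells r2 c2) -eq2 in H12 H2A *.
exact: heffter_extension (esym start) H12 H1A H2A.
Qed.
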